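(* Let $\mathfrak d$ be a delta operator with basic sequence $(p_n(x))_{n\ge0}$, let $a,b\in\mathbb K$, and let $\mathcal Z$ be the arithmetic grid $(a+bi)_{i\ge0}$. Then for every $n\ge1$, $$t_n(x;\mathfrak d,\mathcal Z)=\frac{(x-a)\,p_n(x-a-nb)}{x-a-nb},$$ where the right side is a polynomial since $p_n(y)$ is divisible by $y$.
   Context: $\mathbb K$ is a field of characteristic zero; a delta operator is a linear operator $\mathfrak d$ on $\mathbb K[x]$ commuting with all shifts $E_a:f(x)\mapsto f(x+a)$ and with $\mathfrak d(x)$ a nonzero constant; its basic sequence is the unique $(p_n)$ with $\deg p_n=n$, $p_0=1$, $p_n(0)=0$ ($n\ge1$), $\mathfrak dp_n=np_{n-1}$. $\varepsilon_z$ is evaluation at $z$. $t_n(x;\mathfrak d,\mathcal Z)$ is the $n$-th term of the generalized Gončarov basis associated with $(\mathfrak d,\mathcal Z)$, i.e. the unique sequence $(t_n)_{n\ge0}$ with $\deg t_n=n$ and $\varepsilon_{z_i}(\mathfrak d^{\,i}(t_n))=n!\,\delta_{i,n}$ for all $i,n$. *)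

From HB Require Import structures.
From mathcomp Require Import all_boot all_order all_algebra.
Set Implicit Arguments. Unset Strict Implicit. Unset Printing Implicit Defensive.
Import Order.TTheory GRing.Theory Num.Theory.
Local Open Scope ring_scope.

Definition shiftp (K : fieldType) (a : K) (f : {poly K}) : {poly K} :=
  f \Po ('X + a%:P).

Definition is_delta_operator (K : fieldType) (d : {poly K} -> {poly K}) : Prop :=
  [/\ (forall (c : K) (f g : {poly K}), d (c *: f + g) = c *: d f + d g),
      (forall (a : K) (f : {poly K}), d (shiftp a f) = shiftp a (d f)) &
      (exists2 c : K, c != 0 & d 'X = c%:P)].

Definition is_basic_sequence (K : fieldType) (d : {poly K} -> {poly K})
  (p : nat -> {poly K}) : Prop :=
  [/\ p 0%N = 1,
      (forall n, size (p n) = n.+1),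
      (forall n, (0 < n)%N -> (p n).[0] = 0) &
      (forall n, (0 < n)%N -> d (p n) = n%:R *: p n.-1)].

Definition is_goncarov_basis (K : fieldType) (d : {poly K} -> {poly K})
  (z : nat -> K) (t : nat -> {poly K}) : Prop :=
  (forall n, size (t n) = n.+1) /\
  (forall i n, (iter i d (t n)).[z i] = (n`!)%:R * (i == n)%:R).

(* Write r_n := p_n / x. The heart of the proof is d r_(n+1) = n r_n, shown by
   induction with the Pincherle derivative P f := d (x f) - x d f. Shift-invariant
   operators are power series in the derivative, so P commutes with d; for the
   defect u := d r_(n+2) - (n+1) r_(n+1) this forces d (x u) + P u = 0, and the
   coefficient of x^(deg u) in that sum is (deg u + 2) c u_(deg u), where the
   constant c := d x is nonzero, so u = 0.
   Consequently q_n := (x + n b) r_n satisfies d q_(n+1) = (n+1) q_n and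
   q_n(-n b) = [n = 0], so the translates q_n(x - a - n b) meet the Goncarov
   conditions on the grid a + i b. Since d lowers degrees by exactly one, these
   conditions determine a polynomial of degree at most n. *)

From HB Require Import structures.
From mathcomp Require Import all_boot all_order all_algebra.
Set Implicit Arguments. Unset Strict Implicit. Unset Printing Implicit Defensive.
Import GRing.Theory.
Local Open Scope ring_scope.

Section ShiftInvariant.
Variables (K : fieldType) (charK0 : [pchar K] =i pred0).
Implicit Types (f g : {poly K}) (a y : K).

Definition shift_invariant (L : {poly K} -> {poly K}) :=
  forall a f, L (shiftp a f) = shiftp a (L f).

Lemma horner_shiftp a y f : (shiftp a f).[y] = f.[y + a].
Proof. by rewrite /shiftp horner_comp hornerD hornerX hornerC. Qed.

Lemma shiftp_taylor N y f : (size f <= N)%N ->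
  shiftp y f = \sum_(i < N) (f^`N(i)).[y] *: 'X^i.
Proof.
move=> le_fN; rewrite /shiftp /comp_poly addrC.
rewrite (@nderiv_taylor_wide _ N (f^:P) y%:P 'X) ?size_map_polyC //; last exact: mulrC.
by apply: eq_bigr => i _; rewrite nderivn_map horner_map mul_polyC.
Qed.

Lemma natf_inj : injective (fun n : nat => n%:R : K).
Proof.
have natf_eq0 := (pcharf0P K).1 charK0.
suff le_nat m n : (m%:R : K) = n%:R -> (n <= m)%N.
  by move=> m n e; apply/eqP; rewrite eqn_leq !le_nat.
move=> e; rewrite leqNgt; apply/negP => lt_mn.
by move: (natf_eq0 (n - m)%N); rewrite (natrB _ (ltnW lt_mn)) e subrr eqxx subn_eq0 leqNgt lt_mn.
Qed.

Lemma natf_neq0 n : (n.+1%:R : K) != 0.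
Proof. by rewrite ((pcharf0P K).1 charK0). Qed.

Lemma poly_horner_inj f g : (forall y, f.[y] = g.[y]) -> f = g.
Proof.
move=> fg; apply/eqP; rewrite -subr_eq0; apply/eqP.
apply: (@roots_geq_poly_eq0 _ _ [seq i%:R | i <- iota 0 (size (f - g))]).
- by apply/allP=> _ /mapP [i _ ->]; rewrite /root hornerD hornerN fg subrr.
- by rewrite map_inj_uniq ?iota_uniq //; apply: natf_inj.
by rewrite size_map size_iota.
Qed.

Lemma size_derivn_le f k : (size f^`(k) <= size f)%N.
Proof.
apply/leq_sizeP => j le_fj; rewrite coef_derivn nth_default ?mul0rn //.
exact: leq_trans le_fj (leq_addl _ _).
Qed.

Definition expansion_coef (L : {poly K} -> {poly K}) i := (L 'X^i).[0] / i`!%:R.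

Section Expansion.
Variable L : {linear {poly K} -> {poly K}}.
Hypothesis L_shift : shift_invariant L.

Lemma shift_invariant_expansion N f : (size f <= N)%N ->
  L f = \sum_(i < N) expansion_coef L i *: f^`(i).
Proof.
move=> le_fN; apply: poly_horner_inj => y.
have -> : (L f).[y] = (L (shiftp y f)).[0] by rewrite L_shift horner_shiftp add0r.
rewrite (shiftp_taylor y le_fN) linear_sum !horner_sum; apply: eq_bigr => i _.
rewrite linearZ !hornerZ nderivn_def hornerMn /expansion_coef mulrnAr -mulrnAl -mulr_natr.
by rewrite divfK ?(mulrC (L _).[0]) // -(prednK (fact_gt0 i)) natf_neq0.
Qed.

Lemma coef_shift_invariant N f j : (size f <= N)%N ->
  (L f)`_j = \sum_(i < N) expansion_coef L i * (f`_(i + j) *+ (i + j) ^_ i).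
Proof.
move=> le_fN; rewrite (shift_invariant_expansion le_fN) coef_sum.
by apply: eq_bigr => i _; rewrite coefZ coef_derivn.
Qed.

Lemma size_shift_invariant f : (size (L f) <= size f)%N.
Proof.
apply/leq_sizeP => j le_fj; rewrite (coef_shift_invariant _ (leqnn _)).
by rewrite big1 // => i _; rewrite nth_default ?mul0rn ?mulr0 // (leq_trans le_fj) ?leq_addl.
Qed.

Lemma shift_invariant_derivn f k : L f^`(k) = (L f)^`(k).
Proof.
rewrite (shift_invariant_expansion (size_derivn_le f k)).
rewrite (shift_invariant_expansion (leqnn (size f))) linear_sum.
by apply: eq_bigr => i _; rewrite linearZ /= /derivn -!iterD addnC.
Qed.

End Expansion.

Lemma shift_invariant_comm (L M : {linear {poly K} -> {poly K}}) f :
  shift_invariant L -> shift_invariant M -> L (M f) = M (L f).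
Proof.
move=> L_shift M_shift.
rewrite (shift_invariant_expansion L_shift (size_shift_invariant M_shift f)).
rewrite (shift_invariant_expansion L_shift (leqnn (size f))) linear_sum.
by apply: eq_bigr => i _; rewrite linearZ /= (shift_invariant_derivn M_shift).
Qed.

End ShiftInvariant.

Definition pincherle (K : fieldType) (L : {poly K} -> {poly K}) (g : {poly K}) :=
  L ('X * g) - 'X * L g.

Fact pincherle_is_linear (K : fieldType) (L : {linear {poly K} -> {poly K}}) :
  linear (pincherle L).
Proof.
move=> k f g; rewrite /pincherle mulrDr linearD -scalerAr linearP linearZ /=.
by rewrite mulrDr -scalerAr scalerBr opprD addrACA.
Qed.

HB.instance Definition _ (K : fieldType) (L : {linear {poly K} -> {poly K}}) :=
  GRing.isLinear.Build K {poly K} {poly K} _ (pincherle L) (pincherle_is_linear L).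

Lemma pincherle_shift_invariant (K : fieldType) (L : {linear {poly K} -> {poly K}}) :
  shift_invariant L -> shift_invariant (pincherle L).
Proof.
move=> L_shift a g; rewrite /pincherle L_shift.
have -> : 'X * shiftp a g = shiftp a ('X * g) - a *: shiftp a g.
  by rewrite /shiftp comp_polyM comp_polyX mulrDl mul_polyC addrK.
rewrite linearB linearZ /= !L_shift /shiftp comp_polyB comp_polyM comp_polyX.
by rewrite mulrDl mul_polyC opprD addrA addrAC.
Qed.

Section DeltaOperator.
Variables (K : fieldType) (charK0 : [pchar K] =i pred0).
Variable d : {linear {poly K} -> {poly K}}.
Hypothesis d_shift : shift_invariant d.
Variable c : K.
Hypotheses (c_neq0 : c != 0) (dX : d 'X = c%:P).
Implicit Types (f g u v : {poly K}).

Lemma delta1 : d 1 = 0.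
Proof.
apply: (addrI c%:P); rewrite addr0 -{1}dX -polyC1 -linearD.
by rewrite -[in LHS](comp_polyX ('X + 1%:P)) -/(shiftp 1 'X) d_shift dX /shiftp comp_polyC.
Qed.

Lemma coef_delta_top m f : (size f <= m.+2)%N -> (d f)`_m = c * f`_m.+1 *+ m.+1.
Proof.
move=> le_f; rewrite (coef_shift_invariant charK0 d_shift _ le_f) !big_ord_recl big1.
  by rewrite /expansion_coef expr0 delta1 horner0 !mul0r expr1 dX hornerC divr1 add0r addr0 ffactn1 mulrnAr.
move=> i _; rewrite nth_default ?mul0rn ?mulr0 //.
by rewrite (leq_trans le_f) // !addSn !ltnS leq_addl.
Qed.

Lemma size_delta f : size (d f) = (size f).-1.
Proof.
apply/eqP; rewrite eqn_leq; apply/andP; split.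
  apply/leq_sizeP => j le_fj; have le_f : (size f <= j.+1)%N by case: (size f) le_fj.
  by rewrite coef_delta_top ?(leqW le_f) // nth_default // mulr0 mul0rn.
case def_f: (size f) => [|[|m]] //=.
have : (d f)`_m != 0.
  rewrite coef_delta_top ?def_f // -mulr_natr !mulf_neq0 ?(natf_neq0 charK0) //.
  have : lead_coef f != 0 by rewrite lead_coef_eq0 -size_poly_eq0 def_f.
  by rewrite lead_coefE def_f.
by move=> nz; rewrite ltnNge; apply: contra nz => /leq_sizeP ->.
Qed.

Lemma iter_delta_eq0 m f : (size f <= m)%N -> iter m d f = 0.
Proof.
elim: m f => [|m IHm] f le_fm; first exact/size_poly_leq0P.
by rewrite iterSr IHm // size_delta -subn1 leq_subLR add1n.
Qed.

Lemma iter_linearB k f g : iter k d (f - g) = iter k d f - iter k d g.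
Proof. by elim: k => //= k ->; rewrite linearB. Qed.

Lemma iter_shift_invariant k a f : iter k d (shiftp a f) = shiftp a (iter k d f).
Proof. by elim: k => //= k ->; rewrite d_shift. Qed.

Lemma goncarov_uniq m (z : nat -> K) v : (size v <= m)%N ->
  (forall i, (i < m)%N -> (iter i d v).[z i] = 0) -> v = 0.
Proof.
elim: m z v => [|m IHm] z v le_vm v_z; first exact/size_poly_leq0P.
have dv0 : d v = 0.
  apply: (IHm (z \o S)); first by rewrite size_delta -subn1 leq_subLR add1n.
  by move=> i lt_im; rewrite -iterSr v_z.
have le_v1 : (size v <= 1)%N by rewrite -subn_eq0 subn1 -size_delta dv0 size_poly0.
by have := v_z 0%N isT; rewrite /= (size1_polyC le_v1) hornerC => ->.
Qed.

Lemma coef_pincherle_top m f : (size f <= m.+1)%N -> (pincherle d f)`_m = c * f`_m.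
Proof.
move=> le_f.
rewrite (coef_shift_invariant charK0 (pincherle_shift_invariant d_shift) _ le_f).
rewrite big_ord_recl big1 ?addr0.
  by rewrite /expansion_coef expr0 /= /pincherle mulr1 delta1 mulr0 subr0 dX hornerC divr1 mulr1n.
move=> i _; rewrite nth_default ?mul0rn ?mulr0 //.
by rewrite (leq_trans le_f) // addSn ltnS leq_addl.
Qed.

Lemma pincherle_delta_eq0 u : d ('X * u) + pincherle d u = 0 -> u = 0.
Proof.
move=> eq0; apply/eqP; apply: contraT => u_neq0.
have def_u : size u = (size u).-1.+1 by rewrite prednK // size_poly_gt0.
set m := (size u).-1 in def_u.
have lead_u : u`_m != 0 by rewrite -lead_coefE lead_coef_eq0.
have le_Xu : (size ('X * u)%R <= m.+2)%N by rewrite mulrC size_mulX // def_u.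
have := congr1 (fun q : {poly K} => q`_m) eq0.
rewrite /= coefD coef0 coef_delta_top // coefXM coef_pincherle_top ?def_u // -mulrSr.
by move/eqP; rewrite /= -mulr_natr !mulf_eq0 (negbTE c_neq0) (negbTE lead_u) (negbTE (natf_neq0 charK0 _)).
Qed.

Lemma iter_delta_ffact (s : nat -> {poly K}) i n :
  (forall k, d (s k.+1) = k.+1%:R *: s k) -> (i <= n)%N ->
  iter i d (s n) = (n ^_ i)%:R *: s (n - i)%N.
Proof.
move=> ds; elim: i => [|i IHi] le_in; first by rewrite subn0 scale1r.
rewrite iterS (IHi (ltnW le_in)) linearZ /= -subnSK // ds scalerA ffactnSr natrM.
by rewrite subnSK.
Qed.

Variable p : nat -> {poly K}.
Hypotheses (p0 : p 0 = 1) (size_p : forall n, size (p n) = n.+1)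
  (p_at0 : forall n, (0 < n)%N -> (p n).[0] = 0)
  (delta_p : forall n, (0 < n)%N -> d (p n) = n%:R *: p n.-1).

Definition p_divX n := p n %/ 'X.

Lemma p_mul_divX n : (0 < n)%N -> p n = 'X * p_divX n.
Proof.
move=> n_gt0; rewrite /p_divX divpKC // -['X]subr0 -polyC0 dvdp_XsubCl.
exact/eqP/p_at0.
Qed.

Lemma size_p_divX n : size (p_divX n) = n.
Proof. by rewrite size_divp ?polyX_eq0 // size_p size_polyX subn1. Qed.

Lemma pincherle_p_divX n :
  d (p_divX n.+1) = n%:R *: p_divX n -> pincherle d (p_divX n.+1) = p n.
Proof.
move=> dr; rewrite /pincherle -p_mul_divX // delta_p // dr -scalerAr.
case: n dr => [|n] _; first by rewrite scale0r subr0 scale1r.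
by rewrite -p_mul_divX //= -scalerBl [n.+2%:R]mulrSr addrAC subrr add0r scale1r.
Qed.

Lemma delta_p_divX n : d (p_divX n.+1) = n%:R *: p_divX n.
Proof.
elim: n => [|n IHn].
  apply/eqP; rewrite scale0r -size_poly_eq0 size_delta size_p_divX //.
set u := d (p_divX n.+2) - n.+1%:R *: p_divX n.+1.
suff /eqP : u = 0 by rewrite subr_eq0 => /eqP.
apply: pincherle_delta_eq0.
have Pr2 : pincherle d (p_divX n.+2) = p n.+1 - 'X * u.
  rewrite /pincherle -p_mul_divX // delta_p // /u mulrBr -scalerAr -p_mul_divX //=.
  by rewrite opprB addrA [n.+2%:R]mulrSr scalerDl scale1r (addrC _ (p _)).
have := congr1 d Pr2.
rewrite (shift_invariant_comm charK0 _ d_shift (pincherle_shift_invariant d_shift)).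
rewrite linearB /= delta_p // -[d (p_divX n.+2)](subrK (n.+1%:R *: p_divX n.+1)) -/u.
rewrite linearD linearZ /= pincherle_p_divX //.
by move/(canRL (addrK _)); rewrite addrAC subrr add0r => ->; rewrite subrr.
Qed.

Variable b : K.

(* (x + n b) p_n / x, written so that abel_basic 0 = p_0 = 1. *)
Definition abel_basic n := p n + (n%:R * b) *: p_divX n.

Lemma abel_basic0 : abel_basic 0 = 1.
Proof. by rewrite /abel_basic mul0r scale0r addr0. Qed.

Lemma delta_abel_basic n : d (abel_basic n.+1) = n.+1%:R *: abel_basic n.
Proof.
rewrite /abel_basic linearD linearZ /= delta_p // delta_p_divX scalerDr !scalerA.
by rewrite -mulrA (mulrC b).
Qed.

Lemma size_abel_basic n : (size (abel_basic n) <= n.+1)%N.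
Proof.
rewrite (leq_trans (size_polyD _ _)) // geq_max size_p leqnn /=.
by rewrite (leq_trans (size_scale_leq _ _)) // size_p_divX.
Qed.

Lemma abel_basic_mulX n : (0 < n)%N ->
  abel_basic n = ('X + (n%:R * b)%:P) * p_divX n.
Proof. by move=> n_gt0; rewrite /abel_basic p_mul_divX // mulrDl mul_polyC. Qed.

Lemma horner_abel_basic n : (abel_basic n).[- (n%:R * b)] = (n == 0)%:R.
Proof.
case: n => [|n]; first by rewrite abel_basic0 hornerC.
by rewrite abel_basic_mulX // hornerM hornerD hornerX hornerC addNr mul0r.
Qed.

Variable a : K.

Definition goncarov n := shiftp (- (a + n%:R * b)) (abel_basic n).

Lemma size_goncarov n : (size (goncarov n) <= n.+1)%N.
Proof. by rewrite /goncarov /shiftp size_comp_poly2 ?size_XaddC // size_abel_basic. Qed.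

Lemma horner_iter_goncarov i n :
  (iter i d (goncarov n)).[a + i%:R * b] = n`!%:R * (i == n)%:R.
Proof.
have [le_in | lt_ni] := leqP i n; last first.
  by rewrite iter_delta_eq0 ?horner0 ?gtn_eqF ?mulr0 // (leq_trans (size_goncarov n)).
rewrite iter_shift_invariant horner_shiftp (iter_delta_ffact delta_abel_basic le_in).
have -> : a + i%:R * b + - (a + n%:R * b) = - ((n - i)%N%:R * b).
  by rewrite natrB // opprD addrACA subrr add0r -mulrBl -mulNr opprB.
rewrite hornerZ horner_abel_basic subn_eq0.
have [-> | ne_in] := eqVneq i n; first by rewrite ffactnn leqnn.
by rewrite leqNgt ltn_neqAle ne_in le_in !mulr0.
Qed.

Lemma goncarov_basisE t : is_goncarov_basis d (fun i => a + i%:R * b) t ->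
  forall n, t n = goncarov n.
Proof.
move=> [size_t t_basis] n; apply/eqP; rewrite -subr_eq0; apply/eqP.
apply: (goncarov_uniq (m := n.+1) (z := fun i => a + i%:R * b)).
  by rewrite (leq_trans (size_polyD _ _)) // size_polyN geq_max size_t leqnn size_goncarov.
by move=> i _; rewrite iter_linearB hornerD hornerN t_basis horner_iter_goncarov subrr.
Qed.

Lemma goncarov_mul n : (0 < n)%N ->
  goncarov n * ('X - (a + n%:R * b)%:P) =
  ('X - a%:P) * (p n \Po ('X - (a + n%:R * b)%:P)).
Proof.
move=> n_gt0; rewrite /goncarov /shiftp abel_basic_mulX // p_mul_divX //.
rewrite !comp_polyM comp_polyD !comp_polyX comp_polyC -polyCN -addrA -polyCD.
by rewrite opprD addrNK polyCN mulrAC mulrA.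
Qed.

End DeltaOperator.

Theorem mainTheorem16 (K : fieldType) (charK0 : [pchar K] =i pred0)
  (d : {poly K} -> {poly K}) (p : nat -> {poly K}) (a b : K)
  (t : nat -> {poly K}) :
  is_delta_operator d ->
  is_basic_sequence d p ->
  is_goncarov_basis d (fun i => a + i%:R * b) t ->
  forall n : nat, (0 < n)%N ->
    t n * ('X - (a + n%:R * b)%:P) =
    ('X - a%:P) * (p n \Po ('X - (a + n%:R * b)%:P)).
Proof.
move=> [d_lin d_shift [c c_neq0 dX]] [p0 size_p p_at0 delta_p] t_basis n n_gt0.
pose D : {linear {poly K} -> {poly K}} :=
  HB.pack d (GRing.isLinear.Build K {poly K} {poly K} *:%R d d_lin).
rewrite (@goncarov_basisE _ charK0 D d_shift _ c_neq0 dX _ p0 size_p p_at0 delta_p _ _ _ t_basis).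
exact: goncarov_mul.
Qed.
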